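(* Let $\mathcal G=(\mathcal V,\mathcal E,W)$ be a network, $h\in\mathbb{R}^{\mathcal V}$, and consider the SNC game with binary actions on $\mathcal G$ with external field $h$, with set of Nash equilibria $\mathcal N$. Let $\mathcal V=\mathcal R\cup\mathcal S$, $\mathcal R\cap\mathcal S=\emptyset$, be a binary partition such that $\mathcal G_{\mathcal R}$ is structurally balanced, and let $\tau\in\{\pm1\}^{\mathcal R}$ be such that $\mathcal G_{\mathcal R}^{[\tau]}$ is unsigned. Let $h^-,h^+\in\mathbb{R}^{\mathcal R}$ be given by $$h_i^+=\tau_ih_i+w_i^{\mathcal S},\qquad h_i^-=\tau_ih_i-w_i^{\mathcal S},\qquad i\in\mathcal R.$$ Assume that $\mathcal G_{\mathcal R}^{[\tau]}$ is $(h^-,h^+)$-indecomposable and that $$w_i^{\mathcal R}-|h_i|>w_i^{\mathcal S}\qquad\forall i\in\mathcal R.$$ Then: (i) if, for each $y\in\{\tau,-\tau\}$, the set $\mathcal N_{\mathcal S}^{(y)}$ is globally BR-reachable for the $\mathcal S$-restricted game with strategy profile of players in $\mathcal R$ frozen to $y$, then the set $\overline{\mathcal N}=\{x^*\in\mathcal N:\ x^*_{\mathcal R}\in\{\tau,-\tau\}\}$ is globally BR-reachable for the SNC game; (ii) if, for each $y\in\{\tau,-\tau\}$, there exists a nonempty subset $\bar{\mathcal N}_{\mathcal S}^{(y)}\subseteq\mathcal N_{\mathcal S}^{(y)}$ that is globally BR-stable for the $\mathcal S$-restricted game with strategy profile of players in $\mathcal R$ frozen to $y$, then there exists a globally BR-stable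 (for the SNC game) subset of Nash equilibria contained in $\overline{\mathcal N}$.
   Context: A network is a triple $\mathcal G=(\mathcal V,\mathcal E,W)$ where $\mathcal V$ is a finite nonempty set, $\mathcal E\subseteq\mathcal V\times\mathcal V$, and $W\in\mathbb{R}^{\mathcal V\times\mathcal V}$ has zero diagonal and satisfies $W_{ij}\neq0$ iff $(i,j)\in\mathcal E$ (weights may have either sign; $W$ need not be symmetric). It is unsigned if $W\ge0$ entrywise. For $\mathcal U\subseteq\mathcal V$, the subnetwork $\mathcal G_{\mathcal U}$ has node set $\mathcal U$, links $\mathcal E\cap(\mathcal U\times\mathcal U)$ and weight matrix $W_{\mathcal U\mathcal U}$. A network is structurally balanced if its node set can be written as a disjoint union $\mathcal V_1\cup\mathcal V_2$ with $W_{ij}\ge0$ whenever $i,j$ lie in the same part and $W_{ij}\le0$ whenever they lie in different parts. For $\sigma\in\{\pm1\}^{\mathcal U}$ and a network on node set $\mathcal U$ with weight matrix $M$, the $[\sigma]$-transformed network has the same nodes and links and weight matrix $[\sigma]M[\sigma]$, where $[\sigma]$ is the diagonal matrix with diagonal $\sigma$. For $i\in\mathcal V$ and $\mathcal B\subseteq\mathcal V$, $w_i^{\mathcal B}=\sum_{j\in\mathcal B}|W_{ij}|$ (these quantities are unchanged by $[\sigma]$-transformations). Indecomposability: a network $(\mathcal U,\mathcal E',M)$ with $h^-\le h^+$ in $\mathbb{R}^{\mathcal U}$ is $(h^-,h^+)$-indecomposable if for every partition $\mathcal U=\mathcal U^-\cup\mathcal U^+$ into two disjoint nonempty sets there is a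 node $i$ with either $i\in\mathcal U^+$ and $w_i^{\mathcal U^+}+h_i^+<w_i^{\mathcal U^-}$, or $i\in\mathcal U^-$ and $w_i^{\mathcal U^-}-h_i^-<w_i^{\mathcal U^+}$ (degrees computed with $|M|$). The SNC game with binary actions on $\mathcal G$ with external field $h\in\mathbb{R}^{\mathcal V}$ has player set $\mathcal V$, action set $\{-1,+1\}$ for each player, strategy profiles $\mathcal X=\{\pm1\}^{\mathcal V}$, and utilities $u_i(x)=h_ix_i+x_i\sum_{j\in\mathcal V}W_{ij}x_j$. Best responses $\mathcal B_i(x_{-i})=\arg\max_{x_i\in\{\pm1\}}u_i(x_i,x_{-i})$; Nash equilibrium: $x^*_i\in\mathcal B_i(x^*_{-i})$ for all $i$. For $y\in\{\pm1\}^{\mathcal R}$, the $\mathcal S$-restricted game with strategy profile of players in $\mathcal R$ frozen to $y$ has player set $\mathcal S$, actions $\{\pm1\}$, and utilities $u_i^{(y)}(z)=u_i(y,z)$ for $i\in\mathcal S$, $z\in\{\pm1\}^{\mathcal S}$; $\mathcal N_{\mathcal S}^{(y)}$ is its set of Nash equilibria. BR-dynamics notions, for any game with binary actions and profile set $\mathcal Y$: a BR-path of length $l\ge0$ from $x$ to $y$ is a sequence $x^{(0)}=x,x^{(1)},\dots,x^{(l)}=y$ such that for each $k$ there is a player $i_k$ with $x^{(k)}_{-i_k}=x^{(k-1)}_{-i_k}$ and $x^{(k)}_{i_k}\in\mathcal B_{i_k}(x^{(k-1)}_{-i_k})\setminus\{x^{(k-1)}_{i_k}\}$. A set $\mathcal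 Y^*\subseteq\mathcal Y$ is globally BR-reachable if from every profile there is a BR-path to some element of $\mathcal Y^*$; BR-invariant if there is no BR-path from an element of $\mathcal Y^*$ to an element outside $\mathcal Y^*$; globally BR-stable if it is both. *)

From HB Require Import structures.
From mathcomp Require Import all_boot all_order all_algebra.
Set Implicit Arguments. Unset Strict Implicit. Unset Printing Implicit Defensive.
Import Order.TTheory GRing.Theory Num.Theory.
Local Open Scope ring_scope.

Definition sgn {R : pzRingType} (b : bool) : R := if b then 1 else -1.

Section BinaryGames.
Variables (R : realFieldType) (I : finType).
Variable u : I -> {ffun I -> bool} -> R.

Definition upd (x : {ffun I -> bool}) (i : I) (b : bool) : {ffun I -> bool} :=
  [ffun j => if j == i then b else x j].

Definition is_BR (i : I) (x : {ffun I -> bool}) (b : bool) : bool :=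
  [forall b' : bool, u i (upd x i b') <= u i (upd x i b)].

(* one BR step: a single player i switches to a best response different from
   its current action (with binary actions, this is the flipped action) *)
Definition BRstep : rel {ffun I -> bool} :=
  fun x y => [exists i : I, is_BR i x (~~ x i) && (y == upd x i (~~ x i))].

Definition BRpath (x y : {ffun I -> bool}) : Prop :=
  exists s : seq {ffun I -> bool}, path BRstep x s /\ last x s = y.

Definition Nash (x : {ffun I -> bool}) : Prop := forall i, is_BR i x (x i).

Definition BR_reachable (A : {ffun I -> bool} -> Prop) : Prop :=
  forall x, exists y, A y /\ BRpath x y.
Definition BR_invariant (A : {ffun I -> bool} -> Prop) : Prop :=
  forall x y, A x -> BRpath x y -> A y.
Definition BR_stable (A : {ffun I -> bool} -> Prop) : Prop :=
  BR_reachable A /\ BR_invariant A.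
End BinaryGames.

Section Networks.
Variables (R : realFieldType) (V : finType).

(* a network is given by its weight matrix W (links = nonzero entries) *)
Definition network (W : V -> V -> R) : Prop :=
  (0 < #|V|)%N /\ forall i, W i i = 0.

Definition wdeg (W : V -> V -> R) (i : V) (B : {set V}) : R :=
  \sum_(j in B) `|W i j|.

Definition struct_balanced (U : {set V}) (W : V -> V -> R) : Prop :=
  exists V1 : {set V}, V1 \subset U /\
    forall i j, i \in U -> j \in U ->
      ((i \in V1) = (j \in V1) -> 0 <= W i j) /\
      ((i \in V1) != (j \in V1) -> W i j <= 0).

Definition transf (sigma : V -> bool) (M : V -> V -> R) : V -> V -> R :=
  fun i j => sgn (sigma i) * M i j * sgn (sigma j).

Definition unsigned_on (U : {set V}) (M : V -> V -> R) : Prop :=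
  forall i j, i \in U -> j \in U -> 0 <= M i j.

Definition indecomposable (U : {set V}) (M : V -> V -> R) (hm hp : V -> R)
  : Prop :=
  (forall i, i \in U -> hm i <= hp i) /\
  forall Up Um : {set V},
    Up :|: Um = U -> [disjoint Up & Um] -> Up != set0 -> Um != set0 ->
    exists i,
      (i \in Up /\ wdeg M i Up + hp i < wdeg M i Um) \/
      (i \in Um /\ wdeg M i Um - hm i < wdeg M i Up).

Definition snc_u (W : V -> V -> R) (h : V -> R) (i : V) (x : {ffun V -> bool})
  : R := h i * sgn (x i) + sgn (x i) * \sum_j W i j * sgn (x j).

Definition Spl (Rs : {set V}) := {i : V | i \in ~: Rs}.

Definition combine (Rs : {set V}) (y : {ffun V -> bool})
  (z : {ffun Spl Rs -> bool}) : {ffun V -> bool} :=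
  [ffun i => match @insub V (fun k => k \in ~: Rs) (Spl Rs) i with
             | Some j => z j | None => y i end].

Definition restr_u (W : V -> V -> R) (h : V -> R) (Rs : {set V})
  (y : {ffun V -> bool}) (j : Spl Rs) (z : {ffun Spl Rs -> bool}) : R :=
  snc_u W h (val j) (combine y z).

Definition Nbar (W : V -> V -> R) (h : V -> R) (Rs : {set V})
  (tau : {ffun V -> bool}) (x : {ffun V -> bool}) : Prop :=
  Nash (snc_u W h) x /\
  ((forall i, i \in Rs -> x i = tau i) \/ (forall i, i \in Rs -> x i = ~~ tau i)).
End Networks.
Arguments restr_u {R V} W h Rs y j z.

From mathcomp Require Import all_boot all_order all_algebra.
From mathcomp Require Import ring lra.
Set Implicit Arguments. Unset Strict Implicit. Unset Printing Implicit Defensive.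
Import Order.TTheory GRing.Theory Num.Theory.
Local Open Scope ring_scope.

(* Let a_i(x) = tau_i (h_i + sum_j W_ij x_j) be the alignment with tau of the
   local field of a node i in R; i plays a best response iff x_i tau_i a_i >= 0.
   From any profile, first let the R-nodes playing tau_i with a_i < 0 switch,
   then the R-nodes playing -tau_i with a_i >= 0: since G_R^[tau] is unsigned,
   the second phase only increases alignments, and both phases terminate in a
   profile where the tau-players of R have a_i >= 0 and the others a_i < 0.
   As the nodes of S contribute at most w_i^S to a_i, (h^-,h^+)-indecomposability
   forces one of these two groups to be empty, i.e. x_R = tau or x_R = -tau.
   There the margin w_i^R - |h_i| > w_i^S makes every node of R strictly prefer
   its action whatever S plays, so the BR dynamics from such profiles are those
   of the S-restricted game with R frozen, and both claims transfer. *)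

Lemma sgnN (R : pzRingType) (b : bool) : sgn (~~ b) = - sgn b :> R.
Proof. by case: b; rewrite /= ?opprK. Qed.

Lemma normr_sgn (R : numDomainType) (b : bool) : `|sgn b : R| = 1.
Proof. by case: b; rewrite /= ?normrN normr1. Qed.

Section BRDynamics.
Variables (R : realFieldType) (I : finType) (u : I -> {ffun I -> bool} -> R).

Lemma BRpath_refl x : BRpath u x x.
Proof. by exists [::]. Qed.

Lemma BRpath_cons x y z : BRstep u x y -> BRpath u y z -> BRpath u x z.
Proof. by move=> xy [s [yz <-]]; exists (y :: s); rewrite /= xy yz. Qed.

Lemma BRpath_trans x y z : BRpath u x y -> BRpath u y z -> BRpath u x z.
Proof.
by move=> [s [xy <-]] [t [yz <-]]; exists (s ++ t); rewrite cat_path last_cat xy yz.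
Qed.

Lemma BRstep_flip i x : is_BR u i x (~~ x i) -> BRstep u x (upd x i (~~ x i)).
Proof. by move=> br; apply/existsP; exists i; rewrite br eqxx. Qed.

Lemma is_BR_stay i x : ~~ is_BR u i x (~~ x i) -> is_BR u i x (x i).
Proof.
move=> /forallPn[b]; rewrite -ltNge => lt_b.
have lt_flip : u i (upd x i (~~ x i)) < u i (upd x i (x i)).
  by move: lt_b; case: b; case: (x i); rewrite //= ltxx.
by apply/forallP; case; move: lt_flip; case: (x i) => /= lt_flip; rewrite ?lexx ?ltW.
Qed.

Lemma BRpath_descent (Inv P : {ffun I -> bool} -> Prop) (mu : {ffun I -> bool} -> nat) :
  (forall x, Inv x -> P x \/ exists2 y, BRstep u x y & Inv y /\ (mu y < mu x)%N) ->
  forall x, Inv x -> exists y, [/\ BRpath u x y, Inv y & P y].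
Proof.
move=> step x; have [n] := ubnP (mu x); elim: n x => // n IH x lt_n Ix.
have [Px | [y xy [Iy lt_y]]] := step x Ix; first by exists x; split=> //; apply: BRpath_refl.
have [z [yz Iz Pz]] := IH y (leq_trans lt_y lt_n) Iy.
by exists z; split=> //; apply: BRpath_cons xy yz.
Qed.
End BRDynamics.

Section Restriction.
Variables (R : realFieldType) (V : finType) (u : V -> {ffun V -> bool} -> R).
Variables (Rs : {set V}) (y : {ffun V -> bool}).
Implicit Types (x : {ffun V -> bool}) (z : {ffun Spl Rs -> bool}) (j : Spl Rs).

Definition restricted_game (j : Spl Rs) (z : {ffun Spl Rs -> bool}) : R :=
  u (val j) (combine y z).

Lemma combine_val z (j : Spl Rs) : combine y z (val j) = z j.
Proof. by rewrite ffunE valK. Qed.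

Lemma combine_in z i : i \in Rs -> combine y z i = y i.
Proof. by move=> iR; rewrite ffunE insubN // inE iR. Qed.

Lemma combine_onto x : (forall i, i \in Rs -> x i = y i) ->
  x = combine y [ffun j : Spl Rs => x (val j)].
Proof.
move=> xy; apply/ffunP => i; rewrite ffunE.
by case: insubP => [j _ <-|]; [rewrite ffunE | rewrite inE negbK => /xy].
Qed.

Lemma combine_upd z j b : combine y (upd z j b) = upd (combine y z) (val j) b.
Proof.
apply/ffunP => i; rewrite !ffunE; case: insubP => [k _ <-|iR].
  by rewrite ffunE (inj_eq val_inj).
by case: (i =P val j) => // ij; move: iR; rewrite ij (valP j).
Qed.

Lemma is_BR_restricted j z b :
  is_BR restricted_game j z b = is_BR u (val j) (combine y z) b.
Proof. by apply: eq_forallb => b'; rewrite /restricted_game !combine_upd. Qed.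

Lemma BRstep_restricted z z' :
  BRstep restricted_game z z' -> BRstep u (combine y z) (combine y z').
Proof.
move=> /existsP[j /andP[br /eqP ->]]; rewrite combine_upd -(combine_val z j).
by apply: BRstep_flip; rewrite -is_BR_restricted combine_val.
Qed.

Lemma BRpath_restricted z z' :
  BRpath restricted_game z z' -> BRpath u (combine y z) (combine y z').
Proof.
move=> [s [zs <-]]; exists (map (combine y) s); rewrite last_map; split=> //.
by elim: s z zs => //= z1 s IH z /andP[/BRstep_restricted -> /IH].
Qed.

Hypothesis frozen :
  forall z i, i \in Rs -> ~~ is_BR u i (combine y z) (~~ combine y z i).

Lemma BRstep_combine z x :
  BRstep u (combine y z) x -> exists2 z', BRstep restricted_game z z' & x = combine y z'.
Proof.
move=> /existsP[i /andP[br /eqP ->]].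
have iS : i \in ~: Rs by rewrite inE; apply: contraL br => /(frozen z).
pose j : Spl Rs := exist _ i iS.
exists (upd z j (~~ z j)); last by rewrite combine_upd -(combine_val z j).
by apply: BRstep_flip; rewrite is_BR_restricted -(combine_val z j).
Qed.

Lemma BRpath_combine z x :
  BRpath u (combine y z) x -> exists2 z', BRpath restricted_game z z' & x = combine y z'.
Proof.
move=> [s [zs <-]]; elim: s z zs => [|x1 s IH] z /=.
  by exists z => //; apply: BRpath_refl.
move=> /andP[/BRstep_combine[z1 zz1 ->] z1s]; have [z' z1z' ->] := IH z1 z1s.
by exists z' => //; apply: BRpath_cons zz1 z1z'.
Qed.

Lemma Nash_combine z : Nash u (combine y z) <-> Nash restricted_game z.
Proof.
split=> N i; first by rewrite is_BR_restricted -combine_val; apply: N.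
have [iR | iS] := boolP (i \in Rs); first exact/is_BR_stay/frozen.
have {}iS : i \in ~: Rs by rewrite inE.
by have := N (exist _ i iS); rewrite is_BR_restricted -(combine_val z (exist _ i iS)).
Qed.
End Restriction.

Definition consensus (V : finType) (Rs : {set V}) (tau x : {ffun V -> bool}) : Prop :=
  (forall i, i \in Rs -> x i = tau i) \/ (forall i, i \in Rs -> x i = ~~ tau i).

Lemma consensus_combine (V : finType) (Rs : {set V}) (tau x : {ffun V -> bool}) :
  consensus Rs tau x <->
  exists2 y, y = tau \/ y = [ffun i => ~~ tau i] &
    exists z : {ffun Spl Rs -> bool}, x = combine y z.
Proof.
split=> [[xR | xR] | [y [-> | ->] [z ->]]].
- by exists tau; [left | exists [ffun j => x (val j)]; apply: combine_onto].
- exists [ffun i => ~~ tau i]; first by right.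
  by exists [ffun j => x (val j)]; apply: combine_onto => i iR; rewrite ffunE xR.
- by left=> i iR; rewrite combine_in.
- by right=> i iR; rewrite combine_in // ffunE.
Qed.

Lemma wdeg_transf (R : realFieldType) (V : finType) (sigma : V -> bool)
    (W : V -> V -> R) i B :
  wdeg (transf sigma W) i B = wdeg W i B.
Proof. by apply: eq_bigr => j _; rewrite !normrM !normr_sgn mul1r mulr1. Qed.

Section SNC.
Variables (R : realFieldType) (V : finType) (W : V -> V -> R) (h : V -> R).
Hypothesis W0 : forall i, W i i = 0.
Implicit Types (x : {ffun V -> bool}) (t : V -> bool).

Definition local_field (x : {ffun V -> bool}) i := h i + \sum_j W i j * sgn (x j).

Lemma local_field_upd x i b k :
  local_field (upd x i b) k = local_field x k + W k i * (sgn b - sgn (x i)).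
Proof.
rewrite /local_field -addrA; congr (_ + _).
rewrite (bigD1 i) //= [in RHS](bigD1 i) //= ffunE eqxx.
rewrite addrAC mulrBr addrCA subrr addr0; congr (_ + _).
by apply: eq_bigr => j /negbTE ji; rewrite ffunE ji.
Qed.

Lemma snc_uE x i : snc_u W h i x = sgn (x i) * local_field x i.
Proof. by rewrite /snc_u /local_field mulrDr mulrC. Qed.

Lemma is_BR_snc x i b : is_BR (snc_u W h) i x b = (0 <= sgn b * local_field x i).
Proof.
have field_upd b' : local_field (upd x i b') i = local_field x i.
  by rewrite local_field_upd W0 mul0r addr0.
apply/forallP/idP => [br | ge0 b']; last first.
  by rewrite !snc_uE !ffunE eqxx !field_upd; case: b b' ge0 => [] [] /=; lra.
by have := br (~~ b); rewrite !snc_uE !ffunE eqxx !field_upd; case: b {br} => /=; lra.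
Qed.

Variables (Rs : {set V}) (tau : {ffun V -> bool}).
Implicit Types (y : {ffun V -> bool}) (z : {ffun Spl Rs -> bool}).
Local Notation M := (transf tau W).

Definition alignment x i := sgn (tau i) * local_field x i.

Definition agree (x : {ffun V -> bool}) (t : V -> bool) := [set j in Rs | x j == t j].

Lemma is_BR_tau x i : is_BR (snc_u W h) i x (tau i) = (0 <= alignment x i).
Proof. by rewrite is_BR_snc. Qed.

Lemma is_BR_ntau x i : is_BR (snc_u W h) i x (~~ tau i) = (alignment x i <= 0).
Proof. by rewrite is_BR_snc sgnN mulNr oppr_ge0. Qed.

Lemma card_agree_flip x t i : i \in Rs -> x i = t i ->
  (#|agree (upd x i (~~ x i)) t| < #|agree x t|)%N.
Proof.
move=> iR xi; suff -> : agree (upd x i (~~ x i)) t = agree x t :\ i.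
  by apply/proper_card/properD1; rewrite inE iR xi eqxx.
apply/setP => j; rewrite !inE ffunE; case: (j =P i) => [->|_] //=.
by rewrite xi; case: (t i); rewrite andbF.
Qed.

Lemma agree_all x t : (forall i, i \in Rs -> x i = t i) -> agree x t = Rs.
Proof. by move=> xt; apply/setP => j; rewrite inE andb_idr // => /xt ->. Qed.

Lemma agree_none x t : (forall i, i \in Rs -> x i != t i) -> agree x t = set0.
Proof. by move=> xt; apply/setP => j; rewrite !inE; apply/andP => -[/xt/negPf ->]. Qed.

Hypothesis unsignedM : unsigned_on Rs M.

Lemma transf_normE i j : i \in Rs -> j \in Rs -> M i j = `|W i j|.
Proof.
move=> iR jR; rewrite -(ger0_norm (unsignedM iR jR)).
by rewrite /transf !normrM !normr_sgn mul1r mulr1.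
Qed.

(* As G_R^[tau] is unsigned, the R-part of a_i is exactly w_i^agree - w_i^disagree;
   only the S-part, bounded by w_i^S, depends on the actions outside R. *)
Lemma alignment_near x i : i \in Rs ->
  `|alignment x i - (sgn (tau i) * h i
       + (wdeg W i (agree x tau) - wdeg W i (agree x (negb \o tau))))|
    <= wdeg W i (~: Rs).
Proof.
move=> iR; rewrite /alignment /local_field mulrDr mulr_sumr (bigID (mem Rs)) /=.
have -> : \sum_(j | j \in Rs) sgn (tau i) * (W i j * sgn (x j)) =
          wdeg W i (agree x tau) - wdeg W i (agree x (negb \o tau)).
  rewrite (bigID (fun j => x j == tau j)) /= /wdeg -sumrN; congr (_ + _).
    apply: eq_big => [j | j /andP[jR /eqP ->]]; first by rewrite !inE.
    by rewrite -transf_normE // /transf mulrA.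
  apply: eq_big => [j | j /andP[jR xj]].
    by rewrite !inE /=; case: (x j) (tau j) => [] [].
  have -> : x j = ~~ tau j by move: xj; case: (x j) (tau j) => [] [].
  by rewrite -transf_normE // /transf sgnN !mulrN mulrA.
set S := \sum_(j | j \notin Rs) _; rewrite [X in `|X|](_ : _ = S); last by ring.
have -> : wdeg W i (~: Rs) = \sum_(j | j \notin Rs) `|W i j|.
  by apply: eq_bigl => j; rewrite inE.
apply: le_trans (ler_norm_sum _ _ _) _.
by apply: ler_sum => j _; rewrite normrM normr_sgn mul1r normrM normr_sgn mulr1.
Qed.

Lemma alignment_upd_tau x i k : i \in Rs -> k \in Rs -> x i = ~~ tau i ->
  alignment x k <= alignment (upd x i (tau i)) k.
Proof.
move=> iR kR xi; rewrite /alignment local_field_upd xi sgnN -subr_ge0.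
have -> : sgn (tau k) * (local_field x k + W k i * (sgn (tau i) - - sgn (tau i)))
    - sgn (tau k) * local_field x k = 2 * M k i by rewrite /transf; ring.
by rewrite mulr_ge0 // unsignedM.
Qed.

Definition aligned_nonneg x :=
  forall i, i \in Rs -> x i = tau i -> 0 <= alignment x i.
Definition misaligned_neg x :=
  forall i, i \in Rs -> x i = ~~ tau i -> alignment x i < 0.

Lemma reach_aligned_nonneg x : exists2 x', BRpath (snc_u W h) x x' & aligned_nonneg x'.
Proof.
have [|x' [xx' _ ok]] := @BRpath_descent _ _ (snc_u W h) (fun=> True) aligned_nonneg
    (fun x => #|agree x tau|) _ x I; last by exists x'.
move=> {}x _; have [/existsP[i /and3P[iR /eqP xi lt0]] | /existsPn none] :=
  boolP [exists i, [&& i \in Rs, x i == tau i & alignment x i < 0]].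
- right; exists (upd x i (~~ x i)); last by split=> //; apply: card_agree_flip.
  by apply: BRstep_flip; rewrite xi is_BR_ntau ltW.
- by left=> i iR xi; move: (none i); rewrite iR xi eqxx /= -leNgt.
Qed.

Lemma reach_misaligned_neg x : aligned_nonneg x ->
  exists2 x', BRpath (snc_u W h) x x' & aligned_nonneg x' /\ misaligned_neg x'.
Proof.
move=> ok; have [|x' [xx' ok' ok'']] := @BRpath_descent _ _ (snc_u W h) aligned_nonneg
    misaligned_neg (fun x => #|agree x (negb \o tau)|) _ x ok; last by exists x'.
move=> {ok}x ok; have [/existsP[i /and3P[iR /eqP xi ge0]] | /existsPn none] :=
  boolP [exists i, [&& i \in Rs, x i == ~~ tau i & 0 <= alignment x i]].
- right; exists (upd x i (~~ x i)).
    by apply: BRstep_flip; rewrite xi negbK is_BR_tau.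
  split; last exact: card_agree_flip.
  rewrite xi negbK => k kR; rewrite ffunE.
  case: eqP => [-> _ | _ xk].
  + exact: le_trans ge0 (alignment_upd_tau iR iR xi).
  + exact: le_trans (ok k kR xk) (alignment_upd_tau iR kR xi).
- by left=> i iR xi; move: (none i); rewrite iR xi eqxx /= -ltNge.
Qed.

Hypothesis indecM : indecomposable Rs M
    (fun i => sgn (tau i) * h i - wdeg W i (~: Rs))
    (fun i => sgn (tau i) * h i + wdeg W i (~: Rs)).

Lemma consensus_of_indecomposable x :
  aligned_nonneg x -> misaligned_neg x -> consensus Rs tau x.
Proof.
move=> ok ok'.
have [Up0 | Up_n0] := eqVneq (agree x tau) set0.
  right=> i iR; move/setP: Up0 => /(_ i); rewrite !inE iR /=.
  by case: (x i) (tau i) => [] [].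
have [Um0 | Um_n0] := eqVneq (agree x (negb \o tau)) set0.
  left=> i iR; move/setP: Um0 => /(_ i); rewrite !inE iR /=.
  by case: (x i) (tau i) => [] [].
have cover : agree x tau :|: agree x (negb \o tau) = Rs.
  apply/setP => j; rewrite !inE /= -andb_orr.
  by case: (x j) (tau j) => [] []; rewrite andbT.
have disj : [disjoint agree x tau & agree x (negb \o tau)].
  rewrite -setI_eq0; apply/eqP/setP => j; rewrite !inE /=.
  by case: (x j) (tau j) => [] []; rewrite ?andbF.
have [i [[iU lt] | [iU lt]]] := indecM.2 _ _ cover disj Up_n0 Um_n0;
  move: lt; rewrite !wdeg_transf; move: iU; rewrite inE => /andP[iR /eqP xi];
  have := alignment_near x iR; rewrite ler_norml => /andP[lo hi].
- by have := ok i iR xi; lra.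
- by have := ok' i iR xi; lra.
Qed.

Lemma reach_consensus x : exists2 x', BRpath (snc_u W h) x x' & consensus Rs tau x'.
Proof.
have [x1 xx1 ok1] := reach_aligned_nonneg x.
have [x2 x1x2 [ok2 ok2']] := reach_misaligned_neg ok1.
by exists x2; [apply: BRpath_trans xx1 x1x2 | apply: consensus_of_indecomposable].
Qed.

Hypothesis margin : forall i, i \in Rs -> wdeg W i Rs - `|h i| > wdeg W i (~: Rs).

Lemma consensus_frozen x i : consensus Rs tau x -> i \in Rs ->
  ~~ is_BR (snc_u W h) i x (~~ x i).
Proof.
move=> xR iR.
have := alignment_near x iR; rewrite ler_norml => /andP[lo hi].
have := margin iR.
have : `|sgn (tau i) * h i| <= `|h i| by rewrite normrM normr_sgn mul1r.
rewrite ler_norml => /andP[hlo hhi].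
have wdeg0 : wdeg W i set0 = 0 by rewrite /wdeg big_set0.
case: xR => xR.
- have Up : agree x tau = Rs by apply: agree_all.
  have Um : agree x (negb \o tau) = set0.
    by apply: agree_none => j /xR -> /=; case: (tau j).
  by rewrite xR // is_BR_ntau -ltNge; move: lo hi; rewrite Up Um wdeg0; lra.
- have Up : agree x tau = set0 by apply: agree_none => j /xR ->; case: (tau j).
  have Um : agree x (negb \o tau) = Rs by apply: agree_all.
  by rewrite xR // negbK is_BR_tau -ltNge; move: lo hi; rewrite Up Um wdeg0; lra.
Qed.
Lemma combine_frozen y : y = tau \/ y = [ffun i => ~~ tau i] ->
  forall z i, i \in Rs -> ~~ is_BR (snc_u W h) i (combine y z) (~~ combine y z i).
Proof.
move=> ty z i; apply: consensus_frozen.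
by apply/consensus_combine; exists y => //; exists z.
Qed.

Lemma Nbar_combine y z : y = tau \/ y = [ffun i => ~~ tau i] ->
  Nash (restr_u W h Rs y) z -> Nbar W h Rs tau (combine y z).
Proof.
move=> ty /(Nash_combine (combine_frozen ty)) N; split=> //.
by apply/consensus_combine; exists y => //; exists z.
Qed.

Lemma reach_combine x : exists2 y, y = tau \/ y = [ffun i => ~~ tau i] &
  exists z : {ffun Spl Rs -> bool}, BRpath (snc_u W h) x (combine y z).
Proof.
have [x' xx' /consensus_combine[y ty [z E]]] := reach_consensus x.
by exists y => //; exists z; rewrite -E.
Qed.

Lemma Nbar_BR_reachable :
  (forall y, y = tau \/ y = [ffun i => ~~ tau i] ->
     BR_reachable (restr_u W h Rs y) (Nash (restr_u W h Rs y))) ->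
  BR_reachable (snc_u W h) (Nbar W h Rs tau).
Proof.
move=> reachN x; have [y ty [z xz]] := reach_combine x.
have [z' [Nz' zz']] := reachN y ty z.
exists (combine y z'); split; first exact: Nbar_combine.
exact: BRpath_trans xz (BRpath_restricted zz').
Qed.

(* Lifting every admissible B at once avoids choosing one for each y. *)
Lemma Nbar_BR_stable_subset :
  (forall y, y = tau \/ y = [ffun i => ~~ tau i] ->
     exists A : {ffun Spl Rs -> bool} -> Prop, (exists z, A z) /\
       (forall z, A z -> Nash (restr_u W h Rs y) z) /\ BR_stable (restr_u W h Rs y) A) ->
  exists A : {ffun V -> bool} -> Prop,
    (forall x, A x -> Nbar W h Rs tau x) /\ BR_stable (snc_u W h) A.
Proof.
move=> stableN.
exists (fun x => exists2 y, y = tau \/ y = [ffun i => ~~ tau i] &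
  exists z (B : {ffun Spl Rs -> bool} -> Prop),
    [/\ forall z, B z -> Nash (restr_u W h Rs y) z, BR_stable (restr_u W h Rs y) B,
        B z & x = combine y z]).
split; last split.
- by move=> x [y ty [z [B [NB _ Bz ->]]]]; apply: Nbar_combine (NB _ Bz).
- move=> x; have [y ty [z xz]] := reach_combine x.
  have [B [_ [NB stB]]] := stableN y ty; have [z' [Bz' zz']] := stB.1 z.
  exists (combine y z'); split; last exact: BRpath_trans xz (BRpath_restricted zz').
  by exists y => //; exists z', B.
- move=> x x' [y ty [z [B [NB stB Bz ->]]]].
  move=> /(BRpath_combine (combine_frozen ty))[z' zz' ->].
  by exists y => //; exists z', B; split=> //; apply: stB.2 zz'.
Qed.
End SNC.

Theorem theorem2 (R : realFieldType) (V : finType) (W : V -> V -> R)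
  (h : V -> R) (Rs : {set V}) (tau : {ffun V -> bool}) :
  network W ->
  struct_balanced Rs W ->
  unsigned_on Rs (transf tau W) ->
  indecomposable Rs (transf tau W)
    (fun i => sgn (tau i) * h i - wdeg W i (~: Rs))
    (fun i => sgn (tau i) * h i + wdeg W i (~: Rs)) ->
  (forall i, i \in Rs -> wdeg W i Rs - `|h i| > wdeg W i (~: Rs)) ->
  ((forall y : {ffun V -> bool}, y = tau \/ y = [ffun i => ~~ tau i] ->
      BR_reachable (restr_u W h Rs y) (Nash (restr_u W h Rs y))) ->
    BR_reachable (snc_u W h) (Nbar W h Rs tau))
  /\
  ((forall y : {ffun V -> bool}, y = tau \/ y = [ffun i => ~~ tau i] ->
      exists A : {ffun Spl Rs -> bool} -> Prop,
        (exists z, A z) /\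
        (forall z, A z -> Nash (restr_u W h Rs y) z) /\
        BR_stable (restr_u W h Rs y) A) ->
    exists A : {ffun V -> bool} -> Prop,
      (forall x, A x -> Nbar W h Rs tau x) /\ BR_stable (snc_u W h) A).
Proof.
(* Structural balance of G_R only guarantees that some tau as above exists. *)
move=> [_ W0] _ unsignedM indecM margin; split.
- exact: (Nbar_BR_reachable W0 unsignedM indecM margin).
- exact: (Nbar_BR_stable_subset W0 unsignedM indecM margin).
Qed.
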